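(* Let $k\ge1$, $G=(V,E)$ an inductively $k$-independent graph with $k$-independence ordering $v_1,\dots,v_n$, and $w:V\to\mathbb{Z}_{\ge0}$ vertex weights (write $w_i=w(v_i)$). Let $y$ and $S_{\mathrm{out}}$ be produced by the algorithm PD-MWIS described in the context. Then $w(S_{\mathrm{out}})=\sum_{v\in S_{\mathrm{out}}}w(v)\ge\sum_{i=1}^n y_i$.
   Context: $N(v)$ is the neighbourhood of $v$ (excluding $v$); $G$ is inductively $k$-independent with $k$-independence ordering $v_1,\dots,v_n$ if for every $i$, $G[N(v_i)\cap\{v_i,\dots,v_n\}]$ has no independent set of size more than $k$. Let $A_j=N(v_j)\cap\{v_{j+1},\dots,v_n\}$. Algorithm PD-MWIS: Phase 1: start with an empty stack $S$; for $i=1,\dots,n$: set $y_i=\max\{0,\ w_i-\sum_{j<i,\ v_i\in A_j}y_j\}$, and if $y_i>0$ push $v_i$ onto $S$. Phase 2: with $S_{\mathrm{out}}=\emptyset$, pop the vertices of $S$ one at a time (reverse insertion order), adding a popped $v$ to $S_{\mathrm{out}}$ whenever $S_{\mathrm{out}}\cap N(v)=\emptyset$. Output $S_{\mathrm{out}}$. *)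

From HB Require Import structures.
From mathcomp Require Import all_boot all_order all_algebra.
Set Implicit Arguments. Unset Strict Implicit. Unset Printing Implicit Defensive.
Import Order.TTheory GRing.Theory Num.Theory.
Local Open Scope ring_scope.

(* Simple graph on a finite vertex type V: edge relation e, symmetric and
   irreflexive.  The ordering v_1..v_n is a duplicate-free sequence vs listing
   every vertex; position (0-based) of u in the ordering is index u vs. *)

Section PDMWIS.
Variables (V : finType) (e : rel V) (vs : seq V).

Definition Nbr (v : V) : {set V} := [set u | e v u].

Definition independent (S : {set V}) : bool :=
  [forall x in S, forall y in S, ~~ e x y].

Definition inductively_k_independent (k : nat) : Prop :=
  forall v, v \in vs ->
  forall S : {set V},
    S \subset Nbr v :&: [set u | (index v vs <= index u vs)%N] ->
    independent S -> (#|S| <= k)%N.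

(* A_j = N(v_j) ∩ {v_{j+1},...,v_n}  (j 0-based, vj = v_j) *)
Definition Aset (j : nat) (vj : V) : {set V} :=
  Nbr vj :&: [set u | (j < index u vs)%N].

Variable w : V -> nat.

(* Phase 1.  acc = [:: (v_0,y_0); ...; (v_{i-1},y_{i-1})], v = v_i. *)
Definition ynext (acc : seq (V * int)) (v : V) : int :=
  Num.max 0 ((w v)%:Z -
    \sum_(j < size acc | v \in Aset j (nth (v, 0) acc j).1) (nth (v, 0) acc j).2).

Definition ylist : seq (V * int) :=
  foldl (fun acc v => rcons acc (v, ynext acc v)) [::] vs.

(* The stack: vertices with y_i > 0, in insertion order (last = top). *)
Definition stack : seq V := [seq p.1 | p <- ylist & 0 < p.2].

Definition Sout : {set V} :=
  foldl (fun (S : {set V}) v => if [disjoint S & Nbr v] then v |: S else S) set0 (rev stack).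

End PDMWIS.

From HB Require Import structures.
From mathcomp Require Import all_boot all_order all_algebra.
Set Implicit Arguments. Unset Strict Implicit. Unset Printing Implicit Defensive.
Import Order.TTheory GRing.Theory Num.Theory.
Local Open Scope ring_scope.

(* Phase 1 makes every vertex v with y_v > 0 tight: w_v is the sum of y_u over
   u = v and the earlier neighbours u of v.  Phase 2 drops a popped vertex u
   only if a neighbour kept before it, hence later in the ordering, blocks it;
   so every u with y_u > 0 lies in S_out or is an earlier neighbour of a vertex
   of S_out.  Summing the tight equalities over S_out thus counts every
   positive y_u at least once, and y >= 0. *)

Section RconsScan.
Variables (T R : Type) (f : seq (T * R) -> T -> R).

Definition rcons_scan (s : seq T) : seq (T * R) :=
  foldl (fun acc v => rcons acc (v, f acc v)) [::] s.

Lemma rcons_scan_rcons s v :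
  rcons_scan (rcons s v) = rcons (rcons_scan s) (v, f (rcons_scan s) v).
Proof. exact: foldl_rcons. Qed.

Lemma unzip1_rcons_scan s : unzip1 (rcons_scan s) = s.
Proof.
elim/last_ind: s => // s v IHs.
by rewrite rcons_scan_rcons /unzip1 map_rcons -/(unzip1 _) IHs.
Qed.

Lemma size_rcons_scan s : size (rcons_scan s) = size s.
Proof. by rewrite -{2}(unzip1_rcons_scan s) size_map. Qed.

Lemma nth_rcons_scan p0 s i : (i < size s)%N ->
  (nth p0 (rcons_scan s) i).2 = f (take i (rcons_scan s)) (nth p0.1 s i).
Proof.
elim/last_ind: s => // s v IHs; rewrite size_rcons ltnS leq_eqVlt.
have take_rcons j q :
    (j <= size s)%N -> take j (rcons (rcons_scan s) q) = take j (rcons_scan s).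
  by move=> le_js; rewrite -cats1 takel_cat ?size_rcons_scan.
rewrite rcons_scan_rcons !nth_rcons size_rcons_scan => /predU1P[->|lt_is].
  by rewrite ltnn eqxx take_rcons // -(size_rcons_scan s) take_size.
by rewrite lt_is take_rcons ?IHs // ltnW.
Qed.

End RconsScan.

Lemma pairwise_index (T : eqType) (s : seq T) :
  uniq s -> pairwise (fun a b => index a s < index b s)%N s.
Proof.
case: s => // x0 s'; set s := x0 :: s' => s_uniq.
apply/(pairwiseP x0) => i j i_lt j_lt lt_ij.
by change (index (nth x0 s i) s < index (nth x0 s j) s)%N; rewrite !index_uniq.
Qed.

Lemma sum_le_sum_cover (T : finType) (R : numDomainType) (y : T -> R)
    (Q : rel T) (S : {set T}) :
  (forall u, 0 <= y u) -> (forall u, 0 < y u -> exists2 v, v \in S & Q u v) ->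
  \sum_u y u <= \sum_(v in S) \sum_(u | Q u v) y u.
Proof.
move=> y_ge0 y_covered.
rewrite (exchange_big_dep xpredT) //=; apply: ler_sum => u _.
have := y_ge0 u; rewrite le_eqVlt => /predU1P[<-|/y_covered[v v_S Quv]].
  exact: sumr_ge0.
by rewrite (bigD1 v) ?v_S //= lerDl sumr_ge0.
Qed.

Section Greedy.
Variables (V : finType) (e : rel V).

Definition greedy (s : seq V) : {set V} :=
  foldr (fun v (S : {set V}) => if [disjoint S & Nbr e v] then v |: S else S)
    set0 s.

Lemma greedy_sub s : {subset greedy s <= s}.
Proof.
elim: s => [|x s IHs] u /=; first by rewrite inE.
rewrite in_cons; case: ifP => _; last by move/IHs->; rewrite orbT.
by rewrite in_setU1 => /predU1P[->|/IHs->]; rewrite ?eqxx ?orbT.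
Qed.

Lemma greedy_cover (r : V -> nat) s :
  pairwise (fun a b => r a < r b)%N s ->
  {in s, forall x,
    exists2 u, u \in greedy s & (x == u) || e x u && (r x < r u)%N}.
Proof.
elim: s => //= x s IHs /andP[x_below s_pairwise] z.
set S := greedy s; set S' := if _ then _ else _.
have sub_S : S \subset S' by rewrite /S'; case: ifP => _; rewrite ?subsetUr.
rewrite in_cons => /predU1P[->|z_s]; last first.
  have [u u_S Qzu] := IHs s_pairwise z z_s.
  by exists u => //; apply: subsetP u_S.
rewrite /S'; case: ifP => [_|]; first by exists x; rewrite ?setU11 ?eqxx.
rewrite -setI_eq0 => /set0Pn[u]; rewrite !inE => /andP[u_S e_xu].
by exists u; rewrite // e_xu (allP x_below u (greedy_sub u_S)) orbT.
Qed.

End Greedy.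

Lemma Sout_greedy (V : finType) (e : rel V) (vs : seq V) (w : V -> nat) :
  Sout e vs w = greedy e (stack e vs w).
Proof. exact: foldl_rev. Qed.

Section PrimalDual.
Variables (V : finType) (e : rel V) (vs : seq V) (w : V -> nat).
Hypotheses (vs_uniq : uniq vs) (vs_all : forall v, v \in vs).

Let before u v := (index u vs < index v vs)%N.

Definition yval (x : V) : int := (nth (x, 0) (ylist e vs w) (index x vs)).2.

Lemma ylist_scan : ylist e vs w = rcons_scan (ynext e vs w) vs.
Proof. by []. Qed.

Lemma ylist_yval : ylist e vs w = [seq (x, yval x) | x <- vs].
Proof.
rewrite -[in RHS](unzip1_rcons_scan (ynext e vs w) vs) -ylist_scan -map_comp.
apply/esym/map_id_in => -[x yx] p_in; set P := ylist e vs w in p_in *.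
have i_lt : (index (x, yx) P < size P)%N by rewrite index_mem.
have x_nth : nth x vs (index (x, yx) P) = x.
  rewrite -[vs](unzip1_rcons_scan (ynext e vs w)) -ylist_scan.
  by rewrite (nth_map (x, yx)) ?nth_index.
have x_index : index x vs = index (x, yx) P.
  by rewrite -{1}x_nth index_uniq // -(size_rcons_scan (ynext e vs w)).
by rewrite /= /yval x_index (set_nth_default (x, yx)) ?nth_index.
Qed.

Lemma yval_ynext x :
  yval x = ynext e vs w [seq (u, yval u) | u <- take (index x vs) vs] x.
Proof.
have x_lt : (index x vs < size vs)%N by rewrite index_mem.
rewrite {1}/yval ylist_scan nth_rcons_scan // nth_index //.
by rewrite -ylist_scan ylist_yval map_take.
Qed.

Lemma yvalE x :
  yval x = Num.max 0 ((w x)%:Z - \sum_(u | e u x && before u x) yval u).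
Proof.
rewrite yval_ynext /ynext; congr (Num.max 0 (_ - _)).
set i := index x vs; set acc := map _ _.
have size_acc : size acc = i by rewrite size_map size_takel // index_size.
pose P j := e (nth (x, 0) acc j).1 x.
rewrite (eq_bigl (fun j : 'I_(size acc) => P j)); last first.
  by move=> j; rewrite /Aset !inE -/i -size_acc ltn_ord andbT.
rewrite -(big_mkord P (fun j => (nth (x, 0) acc j).2)).
rewrite -(big_nth _ (fun p => e p.1 x) snd) big_map -big_filter big_uniq.
  by apply: eq_bigl => u; rewrite mem_filter in_take // andbC.
by rewrite filter_uniq ?take_uniq.
Qed.

Lemma yval_ge0 x : 0 <= yval x.
Proof. by rewrite yvalE le_max lexx. Qed.

Lemma stack_yval : stack e vs w = [seq x <- vs | 0 < yval x].
Proof. by rewrite /stack ylist_yval filter_map -map_comp map_id. Qed.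

Lemma yval_tight v : irreflexive e -> 0 < yval v ->
  (w v)%:Z = \sum_(u | (u == v) || e u v && before u v) yval u.
Proof.
move=> e_irr; rewrite (bigD1 v) ?eqxx //=.
rewrite (eq_bigl (fun u => e u v && before u v)); last first.
  by move=> u; case: (eqVneq u v) => [->|_]; rewrite ?e_irr ?andbT.
rewrite [yval v]yvalE lt_max ltxx /= => /ltW slack_ge0.
by rewrite (max_r slack_ge0) subrK.
Qed.

End PrimalDual.

Theorem lemma11 (V : finType) (e : rel V) (vs : seq V) (k : nat) (w : V -> nat) :
  symmetric e -> irreflexive e ->
  uniq vs -> (forall v : V, v \in vs) ->
  (1 <= k)%N ->
  inductively_k_independent e vs k ->
  \sum_(p <- ylist e vs w) p.2 <= \sum_(v in Sout e vs w) (w v)%:Z.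
Proof.
move=> _ e_irr vs_uniq vs_all _ _.
set y := yval e vs w.
pose Q u v := (u == v) || e u v && (index u vs < index v vs)%N.
have S_pos v : v \in Sout e vs w -> 0 < y v.
  rewrite Sout_greedy => /greedy_sub.
  by rewrite stack_yval // mem_filter => /andP[].
have S_covers u : 0 < y u -> exists2 v, v \in Sout e vs w & Q u v.
  move=> y_pos; rewrite Sout_greedy; apply: greedy_cover.
    by rewrite stack_yval //; apply/pairwise_filter/pairwise_index.
  by rewrite stack_yval // mem_filter y_pos vs_all.
rewrite ylist_yval // big_map big_uniq //= (eq_bigl xpredT) //.
rewrite (eq_bigr _
  (fun v v_S => yval_tight vs_uniq vs_all e_irr (S_pos v v_S))).
by apply: (sum_le_sum_cover (Q := Q)) S_covers; apply: yval_ge0.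
Qed.
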